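(* Define on $(0,\pi/2)$ \[ A(x)=(\sin x-x\cos x)^2\cos x,\quad B(x)=x(\sin x-x\cos x)\sin^2x,\quad C(x)=-(2x^2\cos x-x\sin x-\cos x\sin^2x), \] and $g_2(x)=\dfrac{C(x)-\frac85A(x)}{B(x)-3A(x)}$. Then (i) $B(x)-3A(x)>0$ for $x\in(0,\pi/2)$; (ii) $g_2$ is increasing on $(0,\pi/2)$ and $\frac{34}{35}<g_2(x)<1$ for $x\in(0,\pi/2)$. *)

From Stdlib Require Import Reals.
Open Scope R_scope.

Definition A (x : R) : R := (sin x - x * cos x) ^ 2 * cos x.
Definition B (x : R) : R := x * (sin x - x * cos x) * (sin x) ^ 2.
Definition C (x : R) : R := - (2 * x ^ 2 * cos x - x * sin x - cos x * (sin x) ^ 2).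
Definition g2 (x : R) : R := (C x - 8/5 * A x) / (B x - 3 * A x).

(* With t = tan x, p = t - x and q = x (t^2 + 3) - 3 t one has B - 3A = cos^3 x * p q and
   g2 = 2 + (12/5) p/q - t/p, so everything reduces to x < tan x and to the positivity, at
   a = atan t for t > 0, of four polynomials in (a, t): q, the numerator of g2', and the
   numerators of g2 - 34/35 and 1 - g2.  These are certified by exact rational computation.
   On four ranges of t (after t = (1+w)/(1-w), where atan t = pi/4 + atan w, or t = 1/u, where
   atan t = pi/2 - atan u) atan t is enclosed between Taylor polynomials L <= atan t <= U.
   Each polynomial is then expanded in powers of a - L and has a positive constant term and
   nonnegative higher coefficients, except the quadratic one, which is concave in a and
   positive at a = L and a = U.  Positivity of a polynomial on an interval is read off from
   the signs of its coefficients after a Moebius substitution. *)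

From Stdlib Require Import Reals Lra Lia QArith Qreals List ZArith Machin.
From Coquelicot Require Import Coquelicot.
Import ListNotations.
Open Scope R_scope.

Arguments Qred : simpl never.
Arguments Qplus : simpl never.
Arguments Qmult : simpl never.

(** * Polynomials with rational coefficients *)

Definition qpoly := list Q.

Fixpoint peval (P : qpoly) (x : R) : R :=
  match P with nil => 0 | c :: P' => Q2R c + x * peval P' x end.

Fixpoint padd (P Q0 : qpoly) : qpoly :=
  match P, Q0 with
  | nil, _ => Q0
  | _, nil => P
  | a :: P', b :: Q' => Qred (a + b) :: padd P' Q'
  end.

Definition pscale (c : Q) (P : qpoly) : qpoly := map (fun a => Qred (c * a)) P.

Fixpoint pmul (P Q0 : qpoly) : qpoly :=
  match P with nil => nil | a :: P' => padd (pscale a Q0) (0%Q :: pmul P' Q0) end.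

Lemma Q2R_red q : Q2R (Qred q) = Q2R q.
Proof. apply Qeq_eqR, Qred_correct. Qed.

Lemma peval_add P Q0 x : peval (padd P Q0) x = peval P x + peval Q0 x.
Proof.
  revert Q0; induction P as [|a P IH]; intros [|b Q0]; simpl; try ring.
  rewrite IH, Q2R_red, Q2R_plus; ring.
Qed.

Lemma peval_scale c P x : peval (pscale c P) x = Q2R c * peval P x.
Proof.
  induction P as [|a P IH]; simpl; [ring|].
  rewrite IH, Q2R_red, Q2R_mult; ring.
Qed.

Lemma peval_mul P Q0 x : peval (pmul P Q0) x = peval P x * peval Q0 x.
Proof.
  induction P as [|a P IH]; simpl; [ring|].
  rewrite peval_add, peval_scale; simpl; rewrite IH, RMicromega.Q2R_0; ring.
Qed.

Lemma peval_app P Q0 x : peval (P ++ Q0) x = peval P x + x ^ length P * peval Q0 x.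
Proof. induction P as [|a P IH]; simpl; [ring|]. rewrite IH; ring. Qed.

Lemma peval_repeat0 n x : peval (repeat 0%Q n) x = 0.
Proof. induction n as [|n IH]; simpl; [ring|]. rewrite IH, RMicromega.Q2R_0; ring. Qed.

Lemma peval_const_add c P x : peval (padd [c] P) x = Q2R c + peval P x.
Proof. rewrite peval_add; simpl; ring. Qed.

Fixpoint homog_pow (ab cd P : qpoly) : qpoly * qpoly :=
  match P with
  | nil => (nil, [1%Q])
  | p :: P' =>
      let (H, D) := homog_pow ab cd P' in (padd (pscale p D) (pmul ab H), pmul cd D)
  end.

Definition homog (ab cd P : qpoly) : qpoly := fst (homog_pow ab cd P).

Lemma homog_powE ab cd P v : peval cd v <> 0 ->
  peval (snd (homog_pow ab cd P)) v = peval cd v ^ length P /\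
  peval (homog ab cd P) v * peval cd v =
    peval cd v ^ length P * peval P (peval ab v / peval cd v).
Proof.
  unfold homog; intro Hcd; induction P as [|p P [IHD IHH]]; simpl.
  - rewrite RMicromega.Q2R_1; split; ring.
  - destruct (homog_pow ab cd P) as [H D]; simpl in *.
    rewrite !peval_add, peval_scale, !peval_mul, IHD; split; [ring|].
    transitivity (Q2R p * peval cd v ^ length P * peval cd v
                  + peval ab v * (peval H v * peval cd v)); [ring|].
    rewrite IHH; field; exact Hcd.
Qed.

Lemma homogE ab cd P v : peval cd v <> 0 ->
  peval (homog ab cd P) v * peval cd v =
    peval cd v ^ length P * peval P (peval ab v / peval cd v).
Proof. intro Hcd; exact (proj2 (homog_powE ab cd P v Hcd)). Qed.

Fixpoint qeval (P : qpoly) (x : Q) : Q :=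
  match P with nil => 0%Q | c :: P' => Qred (c + x * qeval P' x) end.

Lemma peval_Q2R P x : peval P (Q2R x) = Q2R (qeval P x).
Proof.
  induction P as [|c P IH]; simpl; [symmetry; apply RMicromega.Q2R_0|].
  rewrite Q2R_red, Q2R_plus, Q2R_mult, IH; reflexivity.
Qed.

(** * Positivity certificates *)

Definition qpos (c : Q) : bool := negb (Qle_bool c 0).

Lemma qposP c : qpos c = true -> 0 < Q2R c.
Proof.
  unfold qpos; intro H; apply negb_true_iff in H.
  destruct (Qlt_le_dec 0 c) as [h|h].
  - rewrite <- RMicromega.Q2R_0; now apply Qlt_Rlt.
  - apply Qle_bool_iff in h; congruence.
Qed.

Definition nonneg_coefs (P : qpoly) : bool := forallb (Qle_bool 0) P.

Lemma peval_nonneg P s : nonneg_coefs P = true -> 0 <= s -> 0 <= peval P s.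
Proof.
  induction P as [|a P IH]; simpl; intros H Hs; [lra|].
  apply andb_true_iff in H as [Ha HP].
  apply RMicromega.Qle_true in Ha; rewrite RMicromega.Q2R_0 in Ha.
  pose proof (IH HP Hs); nra.
Qed.

Lemma peval_pos P s : nonneg_coefs P = true -> existsb qpos P = true -> 0 < s ->
  0 < peval P s.
Proof.
  induction P as [|a P IH]; simpl; intros H1 H2 Hs; [discriminate|].
  apply andb_true_iff in H1 as [Ha HP].
  apply RMicromega.Qle_true in Ha; rewrite RMicromega.Q2R_0 in Ha.
  pose proof (peval_nonneg P s HP (Rlt_le _ _ Hs)).
  apply orb_true_iff in H2 as [H2|H2].
  - pose proof (qposP a H2); nra.
  - pose proof (IH HP H2 Hs); nra.
Qed.

Definition den_lcm (P : qpoly) : positive :=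
  Z.to_pos (fold_right (fun c d => Z.lcm (Zpos (Qden c)) d) 1%Z P).

(* Scaling by [den_lcm] keeps the arithmetic of [mobius] on integers. *)
Definition clear_denoms (P : qpoly) : qpoly := pscale (Zpos (den_lcm P) # 1) P.

(* [v = (al + be s) / (1 + s)] maps [s > 0] onto [al < v < be]; the common factor [k] keeps
   the coefficients integral. *)
Definition mobius (al be : Q) (P : qpoly) : qpoly :=
  let k := (Zpos (Qden al * Qden be) # 1)%Q in
  homog [Qred (al * k); Qred (be * k)] [k; k] (clear_denoms P).

Lemma mobius_sign (al be : Q) P v : Q2R al < v < Q2R be ->
  exists s K, 0 < s /\ 0 < K /\ peval (mobius al be P) s = K * peval P v.
Proof.
  intros [Hal Hbe]; unfold mobius, clear_denoms.
  set (k := (Zpos (Qden al * Qden be) # 1)%Q).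
  set (D := (Zpos (den_lcm P) # 1)%Q).
  assert (Hk : 0 < Q2R k) by (unfold k, Q2R; simpl; apply Rmult_lt_0_compat;
    [apply IZR_lt; reflexivity | lra]).
  assert (HD : 0 < Q2R D) by (unfold D, Q2R; simpl; apply Rmult_lt_0_compat;
    [apply IZR_lt; reflexivity | lra]).
  set (s := (v - Q2R al) / (Q2R be - v)).
  assert (Hs : 0 < s) by (apply Rdiv_lt_0_compat; lra).
  assert (Hcd : peval [k; k] s = Q2R k * (1 + s)) by (simpl; ring).
  assert (Hv : peval [Qred (al * k); Qred (be * k)] s / peval [k; k] s = v).
  { rewrite Hcd; simpl; rewrite !Q2R_red, !Q2R_mult; unfold s; field; lra. }
  assert (E := homogE [Qred (al * k); Qred (be * k)] [k; k] (pscale D P) s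
                 ltac:(rewrite Hcd; nra)).
  rewrite Hv, Hcd, peval_scale in E.
  exists s, ((Q2R k * (1 + s)) ^ length (pscale D P) / (Q2R k * (1 + s)) * Q2R D).
  repeat split; [lra | |].
  - apply Rmult_lt_0_compat; [apply Rdiv_lt_0_compat; [apply pow_lt|]|]; nra.
  - apply (Rmult_eq_reg_r (Q2R k * (1 + s))); [rewrite E; field|]; nra.
Qed.

Definition pos_on (al be : Q) (P : qpoly) : bool :=
  let M := mobius al be P in nonneg_coefs M && existsb qpos M.

Definition nonneg_on (al be : Q) (P : qpoly) : bool := nonneg_coefs (mobius al be P).

Lemma pos_onP al be P : pos_on al be P = true ->
  forall v, Q2R al < v < Q2R be -> 0 < peval P v.
Proof.
  unfold pos_on; intros H v Hv; apply andb_true_iff in H as [H1 H2].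
  destruct (mobius_sign al be P v Hv) as (s & K & Hs & HK & E).
  pose proof (peval_pos _ s H1 H2 Hs) as Hpos; rewrite E in Hpos; nra.
Qed.

Lemma nonneg_onP al be P : nonneg_on al be P = true ->
  forall v, Q2R al < v < Q2R be -> 0 <= peval P v.
Proof.
  unfold nonneg_on; intros H v Hv.
  destruct (mobius_sign al be P v Hv) as (s & K & Hs & HK & E).
  pose proof (peval_nonneg _ s H (Rlt_le _ _ Hs)) as Hnn; rewrite E in Hnn; nra.
Qed.

Definition bpoly := list qpoly.

Fixpoint beval (B : bpoly) (a v : R) : R :=
  match B with nil => 0 | c :: B' => peval c v + a * beval B' a v end.

Fixpoint badd (B B' : bpoly) : bpoly :=
  match B, B' with
  | nil, _ => B'
  | _, nil => B
  | c :: B1, c' :: B1' => padd c c' :: badd B1 B1'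
  end.

Definition bmul_lin (L : qpoly) (B : bpoly) : bpoly := badd (map (pmul L) B) (nil :: B).

Fixpoint bshift (B : bpoly) (L : qpoly) : bpoly :=
  match B with nil => nil | c :: B' => badd [c] (bmul_lin L (bshift B' L)) end.

Fixpoint bsubst (B : bpoly) (L : qpoly) : qpoly :=
  match B with nil => nil | c :: B' => padd c (pmul L (bsubst B' L)) end.

Lemma beval_add B B' a v : beval (badd B B') a v = beval B a v + beval B' a v.
Proof.
  revert B'; induction B as [|c B IH]; intros [|c' B']; simpl; try ring.
  rewrite IH, peval_add; ring.
Qed.

Lemma beval_map_mul L B a v : beval (map (pmul L) B) a v = peval L v * beval B a v.
Proof.
  induction B as [|c B IH]; simpl; [ring|]. rewrite IH, peval_mul; ring.
Qed.

Lemma beval_mul_lin L B e v : beval (bmul_lin L B) e v = (peval L v + e) * beval B e v.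
Proof. unfold bmul_lin; rewrite beval_add, beval_map_mul; simpl; ring. Qed.

Lemma beval_shift B L e v : beval (bshift B L) e v = beval B (peval L v + e) v.
Proof.
  induction B as [|c B IH]; cbn [bshift beval]; [ring|].
  rewrite beval_add, beval_mul_lin, IH; cbn [beval]; ring.
Qed.

Lemma peval_subst B L v : peval (bsubst B L) v = beval B (peval L v) v.
Proof.
  induction B as [|c B IH]; simpl; [ring|].
  rewrite peval_add, peval_mul, IH; ring.
Qed.

Lemma beval_nonneg B e v : (forall c, In c B -> 0 <= peval c v) -> 0 <= e ->
  0 <= beval B e v.
Proof.
  induction B as [|c B IH]; intros H He; simpl; [lra|].
  assert (0 <= peval c v) by (apply H; left; reflexivity).
  assert (0 <= beval B e v) by (apply IH; auto; intros; apply H; right; assumption).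
  nra.
Qed.

(* Expanding [B] in powers of [a - L(v)]: a positive constant term and nonnegative
   higher terms make [B] positive wherever [a >= L(v)]. *)
Definition pos_above (al be : Q) (L : qpoly) (B : bpoly) : bool :=
  match bshift B L with
  | nil => false
  | c0 :: B' => pos_on al be c0 && forallb (nonneg_on al be) B'
  end.

Lemma pos_aboveP al be L B : pos_above al be L B = true ->
  forall v a, Q2R al < v < Q2R be -> peval L v <= a -> 0 < beval B a v.
Proof.
  unfold pos_above; intros H v a Hv Ha.
  replace a with (peval L v + (a - peval L v)) by ring.
  rewrite <- beval_shift.
  destruct (bshift B L) as [|c0 B'] eqn:E; [discriminate|].
  apply andb_true_iff in H as [H0 H1]; simpl.
  pose proof (pos_onP _ _ _ H0 v Hv).
  assert (0 <= beval B' (a - peval L v) v).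
  { apply beval_nonneg; [|lra]; intros c Hc.
    rewrite forallb_forall in H1; exact (nonneg_onP _ _ _ (H1 c Hc) v Hv). }
  nra.
Qed.

Lemma concave_quadratic_pos b0 b1 b2 l u a : b2 < 0 -> l <= a <= u ->
  0 < b0 + l * (b1 + l * b2) -> 0 < b0 + u * (b1 + u * b2) ->
  0 < b0 + a * (b1 + a * b2).
Proof.
  intros Hb2 [Hla Hau] Hl Hu.
  destruct (Req_dec a l) as [->|Hal]; [exact Hl|].
  assert (Hlu : l < u) by lra.
  assert (E : (b0 + a * (b1 + a * b2)) * (u - l) =
     (u - a) * (b0 + l * (b1 + l * b2)) + (a - l) * (b0 + u * (b1 + u * b2))
     - b2 * (a - l) * (u - a) * (u - l)) by ring.
  assert (0 <= - b2 * (a - l) * (u - a) * (u - l)).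
  { repeat apply Rmult_le_pos; lra. }
  assert (0 < (a - l) * (b0 + u * (b1 + u * b2))) by (apply Rmult_lt_0_compat; lra).
  assert (0 <= (u - a) * (b0 + l * (b1 + l * b2))) by (apply Rmult_le_pos; lra).
  nra.
Qed.

Definition pos_between (al be : Q) (L U : qpoly) (B : bpoly) : bool :=
  match B with
  | [_; _; d2] => pos_on al be (bsubst B L) && pos_on al be (bsubst B U)
                  && pos_on al be (pscale (Qopp 1) d2)
  | _ => false
  end.

Lemma pos_betweenP al be L U B : pos_between al be L U B = true ->
  forall v a, Q2R al < v < Q2R be -> peval L v <= a <= peval U v -> 0 < beval B a v.
Proof.
  unfold pos_between; intros H v a Hv Ha.
  destruct B as [|d0 [|d1 [|d2 [|]]]]; try discriminate.
  apply andb_true_iff in H as [H H2]; apply andb_true_iff in H as [HL HU].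
  pose proof (pos_onP _ _ _ HL v Hv) as PL; pose proof (pos_onP _ _ _ HU v Hv) as PU.
  pose proof (pos_onP _ _ _ H2 v Hv) as P2.
  rewrite peval_subst in PL, PU; rewrite peval_scale, Q2R_opp, RMicromega.Q2R_1 in P2.
  simpl in *; rewrite Rmult_0_r, Rplus_0_r in *.
  apply (concave_quadratic_pos _ _ _ (peval L v) (peval U v)); lra.
Qed.

Definition bdeg (B : bpoly) : nat := fold_right (fun c n => Nat.max (length c) n) 0%nat B.

Definition pad (n : nat) (P : qpoly) : qpoly := P ++ repeat 0%Q (n - length P).

Definition bchange_var (ab cd : qpoly) (B : bpoly) : bpoly :=
  map (fun c => homog ab cd (pad (bdeg B) c)) B.

Lemma peval_pad n P x : peval (pad n P) x = peval P x.
Proof. unfold pad; rewrite peval_app, peval_repeat0; ring. Qed.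

Lemma length_pad n P : (length P <= n)%nat -> length (pad n P) = n.
Proof. unfold pad; rewrite length_app, repeat_length; lia. Qed.

Lemma length_le_bdeg B c : In c B -> (length c <= bdeg B)%nat.
Proof.
  induction B as [|c' B IH]; simpl; [tauto|].
  intros [->|Hc]; [lia|specialize (IH Hc); lia].
Qed.

Lemma beval_change_var ab cd B a w : peval cd w <> 0 ->
  beval (bchange_var ab cd B) a w * peval cd w =
    peval cd w ^ bdeg B * beval B a (peval ab w / peval cd w).
Proof.
  intro Hcd; unfold bchange_var.
  generalize (length_le_bdeg B); generalize (bdeg B) as n; intros n Hn.
  induction B as [|c B IH]; cbn [map beval]; [ring|].
  transitivity (peval (homog ab cd (pad n c)) w * peval cd w
                + a * (beval (map (fun c => homog ab cd (pad n c)) B) a w * peval cd w));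
    [ring|].
  rewrite homogE, peval_pad, length_pad, IH by (auto; intros; apply Hn; simpl; tauto).
  ring.
Qed.

Lemma beval_change_var_pos ab cd B a w : 0 < peval cd w ->
  0 < beval (bchange_var ab cd B) a w -> 0 < beval B a (peval ab w / peval cd w).
Proof.
  intros Hcd H.
  assert (E := beval_change_var ab cd B a w ltac:(lra)).
  assert (0 < peval cd w ^ bdeg B) by (apply pow_lt; lra).
  nra.
Qed.

(** * Taylor enclosures of atan *)

Definition atan_coef (j : nat) : Q :=
  Qmake (if Nat.even j then 1 else -1) (Pos.of_succ_nat (2 * j)).

Fixpoint atan_taylor (n : nat) : qpoly :=
  match n with O => nil | S n' => atan_taylor n' ++ [0; atan_coef n']%Q end.

Lemma length_atan_taylor n : length (atan_taylor n) = (2 * n)%nat.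
Proof.
  induction n as [|n IH]; [reflexivity|].
  cbn [atan_taylor]; rewrite length_app, IH; simpl; lia.
Qed.

Lemma peval_atan_taylor_S n t : peval (atan_taylor (S n)) t =
  peval (atan_taylor n) t + Q2R (atan_coef n) * t ^ (2 * n + 1).
Proof.
  cbn [atan_taylor]; rewrite peval_app, length_atan_taylor, pow_add; simpl.
  rewrite RMicromega.Q2R_0; ring.
Qed.

Lemma peval_atan_taylor_0 n : peval (atan_taylor n) 0 = 0.
Proof.
  induction n as [|n IH]; [reflexivity|].
  rewrite peval_atan_taylor_S, IH, pow_i by lia; ring.
Qed.

Lemma atan_coef_scaled n : Q2R (atan_coef n) * INR (2 * n + 1) = (-1) ^ n.
Proof.
  unfold atan_coef, Q2R; cbn [Qnum Qden].
  rewrite Zpos_P_of_succ_nat, <- Nat2Z.inj_succ, <- INR_IZR_INZ.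
  replace (S (2 * n)) with (2 * n + 1)%nat by lia.
  assert (INR (2 * n + 1) <> 0) by (apply not_0_INR; lia).
  destruct (Nat.even n) eqn:E.
  - apply Nat.even_spec in E as [m ->]; rewrite pow_1_even; field; assumption.
  - assert (Hodd : Nat.odd n = true) by (unfold Nat.odd; rewrite E; reflexivity).
    apply Nat.odd_spec in Hodd as [m ->].
    replace ((-1) ^ (2 * m + 1)) with (-1) by (rewrite Nat.add_1_r, pow_1_odd; reflexivity).
    field; assumption.
Qed.

Lemma atan_taylor_derive n t :
  is_derive (peval (atan_taylor n)) t ((1 - (- t ^ 2) ^ n) / (1 + t ^ 2)).
Proof.
  assert (Ht : 1 + t ^ 2 <> 0) by nra.
  induction n as [|n IH].
  - replace ((1 - (- t ^ 2) ^ 0) / (1 + t ^ 2)) with 0 by (simpl; field; nra).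
    apply (is_derive_const (V := R_NormedModule) 0).
  - apply is_derive_ext with
      (fun x => peval (atan_taylor n) x + Q2R (atan_coef n) * x ^ (2 * n + 1)).
    { intro x; symmetry; apply peval_atan_taylor_S. }
    replace ((1 - (- t ^ 2) ^ S n) / (1 + t ^ 2)) with
      ((1 - (- t ^ 2) ^ n) / (1 + t ^ 2)
       + Q2R (atan_coef n) * (INR (2 * n + 1) * 1 * t ^ Nat.pred (2 * n + 1))).
    2:{ rewrite Rmult_1_r, <- Rmult_assoc, atan_coef_scaled.
        replace (Nat.pred (2 * n + 1)) with (2 * n)%nat by lia.
        rewrite pow_mult, <- Rpow_mult_distr.
        replace (-1 * t ^ 2) with (- t ^ 2) by ring.
        replace ((- t ^ 2) ^ S n) with (- t ^ 2 * (- t ^ 2) ^ n) by reflexivity.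
        field; nra. }
    apply (is_derive_plus (peval (atan_taylor n))); [exact IH|].
    apply is_derive_scal, is_derive_pow, (is_derive_id (K := R_AbsRing)).
Qed.

(* The error has derivative [(-t^2)^n / (1 + t^2)], of the sign of [(-1)^n]. *)
Lemma atan_taylor_error_sign n t : 0 <= (-1) ^ n * (atan t - peval (atan_taylor n) t) * t.
Proof.
  set (h := fun x => atan x - peval (atan_taylor n) x).
  set (dh := fun x => (- x ^ 2) ^ n / (1 + x ^ 2)).
  assert (Hd : forall x, is_derive h x (dh x)).
  { intro x; unfold h, dh.
    replace ((- x ^ 2) ^ n / (1 + x ^ 2))
      with (/ (1 + x²) - (1 - (- x ^ 2) ^ n) / (1 + x ^ 2)) by (unfold Rsqr; field; nra).
    apply (is_derive_minus atan); [apply is_derive_atan | apply atan_taylor_derive]. }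
  destruct (MVT_gen h 0 t dh) as (c & _ & Hc).
  - intros x _; apply Hd.
  - intros x _; apply derivable_continuous_pt.
    exists (dh x); apply is_derive_Reals, Hd.
  - unfold h in Hc at 2; rewrite atan_0, peval_atan_taylor_0 in Hc.
    assert (Hht : h t = dh c * t) by lra.
    change (0 <= (-1) ^ n * h t * t); rewrite Hht; unfold dh.
    replace ((-1) ^ n * ((- c ^ 2) ^ n / (1 + c ^ 2) * t) * t)
      with ((c ^ 2) ^ n / (1 + c ^ 2) * t ^ 2).
    2:{ replace (c ^ 2) with (-1 * - c ^ 2) at 1 by ring.
        rewrite Rpow_mult_distr; field; nra. }
    apply Rmult_le_pos; [apply Rdiv_le_0_compat; [apply pow_le|]|]; nra.
Qed.

Lemma atan_taylor_bounds_nonneg n t : 0 <= t ->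
  peval (atan_taylor (2 * n)) t <= atan t <= peval (atan_taylor (S (2 * n))) t.
Proof.
  intro Ht; destruct (Req_dec t 0) as [->|Ht0].
  { rewrite atan_0, !peval_atan_taylor_0; lra. }
  pose proof (atan_taylor_error_sign (2 * n) t) as Even.
  pose proof (atan_taylor_error_sign (S (2 * n)) t) as Odd.
  rewrite pow_1_even in Even; rewrite <- tech_pow_Rmult, pow_1_even in Odd.
  split; nra.
Qed.

Lemma atan_taylor_bounds_nonpos n t : t <= 0 ->
  peval (atan_taylor (S (2 * n))) t <= atan t <= peval (atan_taylor (2 * n)) t.
Proof.
  intro Ht; destruct (Req_dec t 0) as [->|Ht0].
  { rewrite atan_0, !peval_atan_taylor_0; lra. }
  pose proof (atan_taylor_error_sign (2 * n) t) as Even.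
  pose proof (atan_taylor_error_sign (S (2 * n)) t) as Odd.
  rewrite pow_1_even in Even; rewrite <- tech_pow_Rmult, pow_1_even in Odd.
  split; nra.
Qed.

Definition pi4_lo : Q := 785398163 # 1000000000.
Definition pi4_hi : Q := 785398164 # 1000000000.

Lemma PI4_bounds : Q2R pi4_lo <= PI / 4 <= Q2R pi4_hi.
Proof.
  rewrite Machin_2_3.
  assert (E2 : / 2 = Q2R (1 # 2)) by (unfold Q2R; simpl; field).
  assert (E3 : / 3 = Q2R (1 # 3)) by (unfold Q2R; simpl; field).
  rewrite E2, E3.
  pose proof (atan_taylor_bounds_nonneg 8 (Q2R (1 # 2)) ltac:(rewrite <- E2; lra)).
  pose proof (atan_taylor_bounds_nonneg 8 (Q2R (1 # 3)) ltac:(rewrite <- E3; lra)).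
  change (S (2 * 8)) with 17%nat in *; change (2 * 8)%nat with 16%nat in *.
  rewrite !peval_Q2R in *.
  assert (Q2R pi4_lo <= Q2R (qeval (atan_taylor 16) (1 # 2))
                        + Q2R (qeval (atan_taylor 16) (1 # 3))).
  { rewrite <- Q2R_plus; apply Qle_Rle, Qle_bool_iff; vm_compute; reflexivity. }
  assert (Q2R (qeval (atan_taylor 17) (1 # 2)) + Q2R (qeval (atan_taylor 17) (1 # 3))
          <= Q2R pi4_hi).
  { rewrite <- Q2R_plus; apply Qle_Rle, Qle_bool_iff; vm_compute; reflexivity. }
  lra.
Qed.

Lemma atan_shift_pi4 t : 0 < t -> atan t = PI / 4 + atan ((t - 1) / (t + 1)).
Proof.
  intro Ht; rewrite <- atan_1.
  replace ((t - 1) / (t + 1)) with (atan_sub t 1) by (unfold atan_sub; f_equal; ring).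
  apply atan_sub_correct; [lra| |apply atan_bound].
  rewrite atan_1; pose proof (atan_bound t); pose proof PI_RGT_0.
  assert (0 < atan t) by (rewrite <- atan_0; apply atan_increasing; exact Ht).
  lra.
Qed.

(** * The key polynomials *)

Definition p_at (a t : R) : R := t - a.
Definition q_at (a t : R) : R := a * (t ^ 2 + 3) - 3 * t.
Definition m_at (a t : R) : R := a * (1 + t ^ 2) - t.

Definition dg2_num : bpoly := [[0; 0; 0; -45; 0; -12; 0]; [0; 0; 135; 0; 87; 0; -12];
  [0; -135; 0; -114; 0; 13; 0]; [45; 0; 15; 0; -25; 0; 5]; [0; 24; 0; 24; 0; 0; 0]]%Q.
Definition gap_upper : bpoly := [[0; 0; -12]; [0; 9; 0]; [3; 0; 5]]%Q.
Definition gap_lower : bpoly := [[0; 0; 81; 0]; [0; -57; 0; 1]; [-24; 0; -36; 0]]%Q.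
Definition q_poly : bpoly := [[0; -3; 0]; [3; 0; 1]]%Q.

Lemma beval_q_poly a t : beval q_poly a t = q_at a t.
Proof. unfold q_poly, q_at; simpl; unfold Q2R; simpl; field. Qed.

Lemma beval_dg2_num a t : beval dg2_num a t =
  5 * m_at a t * q_at a t ^ 2 + 12 * p_at a t ^ 2 * t ^ 2 * q_at a t
  - 24 * t * p_at a t ^ 3 * m_at a t.
Proof. unfold dg2_num, p_at, q_at, m_at; simpl; unfold Q2R; simpl; field. Qed.

Lemma beval_gap_upper a t : beval gap_upper a t =
  5 * t * q_at a t - 5 * p_at a t * q_at a t - 12 * p_at a t ^ 2.
Proof. unfold gap_upper, p_at, q_at; simpl; unfold Q2R; simpl; field. Qed.

Lemma beval_gap_lower a t : beval gap_lower a t =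
  36 * p_at a t * q_at a t + 84 * p_at a t ^ 2 - 35 * t * q_at a t.
Proof. unfold gap_lower, p_at, q_at; simpl; unfold Q2R; simpl; field. Qed.

Definition key_polys_pos (a t : R) : Prop :=
  0 < beval dg2_num a t /\ 0 < beval gap_upper a t /\
  0 < beval gap_lower a t /\ 0 < beval q_poly a t.

Definition range_certified (ab cd L U : qpoly) (al be : Q) : bool :=
  pos_above al be L (bchange_var ab cd dg2_num)
  && pos_above al be L (bchange_var ab cd gap_upper)
  && pos_between al be L U (bchange_var ab cd gap_lower)
  && pos_above al be L (bchange_var ab cd q_poly).

Lemma key_polys_pos_of_certified ab cd L U al be w t :
  range_certified ab cd L U al be = true -> Q2R al < w < Q2R be -> 0 < peval cd w ->
  peval ab w / peval cd w = t -> peval L w <= atan t <= peval U w -> key_polys_pos (atan t) t.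
Proof.
  unfold range_certified, key_polys_pos; intros H Hw Hcd <- [HL HU].
  repeat rewrite andb_true_iff in H; destruct H as [[[H1 H2] H3] H4].
  repeat split; apply beval_change_var_pos; try exact Hcd.
  - exact (pos_aboveP _ _ _ _ H1 w _ Hw HL).
  - exact (pos_aboveP _ _ _ _ H2 w _ Hw HL).
  - exact (pos_betweenP _ _ _ _ _ H3 w _ Hw (conj HL HU)).
  - exact (pos_aboveP _ _ _ _ H4 w _ Hw HL).
Qed.

Lemma range_small_certified : range_certified [0; 1]%Q [1]%Q
  (atan_taylor 10) (atan_taylor 9) 0 (1 # 2) = true.
Proof. vm_compute; reflexivity. Qed.

Lemma range_below_1_certified : range_certified [1; 1]%Q [1; -1]%Q
  (padd [pi4_lo] (atan_taylor 7)) (padd [pi4_hi] (atan_taylor 6)) (-7 # 20) (1 # 100) = true.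
Proof. vm_compute; reflexivity. Qed.

Lemma range_below_3_certified : range_certified [1; 1]%Q [1; -1]%Q
  (padd [pi4_lo] (atan_taylor 4)) (padd [pi4_hi] (atan_taylor 5)) 0 (51 # 100) = true.
Proof. vm_compute; reflexivity. Qed.

Lemma range_large_certified : range_certified [1]%Q [0; 1]%Q
  (padd [Qred (2 * pi4_lo)] (pscale (Qopp 1) (atan_taylor 3)))
  (padd [Qred (2 * pi4_hi)] (pscale (Qopp 1) (atan_taylor 4))) 0 (34 # 100) = true.
Proof. vm_compute; reflexivity. Qed.

Lemma key_polys_pos_small t : 0 < t < 1 / 2 -> key_polys_pos (atan t) t.
Proof.
  intro Ht.
  apply (key_polys_pos_of_certified _ _ _ _ _ _ t t range_small_certified).
  - unfold Q2R; simpl; lra.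
  - simpl; rewrite RMicromega.Q2R_1; lra.
  - simpl; rewrite RMicromega.Q2R_0, RMicromega.Q2R_1; field.
  - split; [apply (atan_taylor_bounds_nonneg 5) | apply (atan_taylor_bounds_nonneg 4)]; lra.
Qed.

Lemma key_polys_pos_below_1 t : 1 / 2 <= t <= 1 -> key_polys_pos (atan t) t.
Proof.
  intro Ht; set (w := (t - 1) / (t + 1)).
  assert (Hw : - 1 / 3 <= w <= 0).
  { unfold w; split; apply Rmult_le_reg_r with (t + 1); try lra; field_simplify; lra. }
  pose proof PI4_bounds.
  assert (Ea : atan t = PI / 4 + atan w) by (apply atan_shift_pi4; lra).
  apply (key_polys_pos_of_certified _ _ _ _ _ _ w t range_below_1_certified).
  - unfold Q2R; simpl; lra.
  - unfold Q2R; simpl; lra.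
  - simpl; unfold Q2R, w; simpl; field; lra.
  - rewrite !peval_const_add.
    pose proof (atan_taylor_bounds_nonpos 3 w ltac:(lra)) as Hb.
    cbn [Nat.mul Nat.add] in Hb; lra.
Qed.

Lemma key_polys_pos_below_3 t : 1 < t < 3 -> key_polys_pos (atan t) t.
Proof.
  intro Ht; set (w := (t - 1) / (t + 1)).
  assert (Hw : 0 < w < 1 / 2).
  { unfold w; split; [apply Rdiv_lt_0_compat; lra|].
    apply Rmult_lt_reg_r with (t + 1); [lra|]; field_simplify; lra. }
  pose proof PI4_bounds.
  assert (Ea : atan t = PI / 4 + atan w) by (apply atan_shift_pi4; lra).
  apply (key_polys_pos_of_certified _ _ _ _ _ _ w t range_below_3_certified).
  - unfold Q2R; simpl; lra.
  - unfold Q2R; simpl; lra.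
  - simpl; unfold Q2R, w; simpl; field; lra.
  - rewrite !peval_const_add.
    pose proof (atan_taylor_bounds_nonneg 2 w ltac:(lra)) as Hb.
    cbn [Nat.mul Nat.add] in Hb; lra.
Qed.

Lemma key_polys_pos_large t : 3 <= t -> key_polys_pos (atan t) t.
Proof.
  intro Ht; set (u := / t).
  assert (Hu : 0 < u <= 1 / 3).
  { unfold u; split; [apply Rinv_0_lt_compat; lra|].
    apply Rmult_le_reg_r with t; [lra|]; field_simplify; lra. }
  pose proof PI4_bounds.
  assert (Ea : atan t = 2 * (PI / 4) - atan u) by (unfold u; rewrite atan_inv by lra; lra).
  apply (key_polys_pos_of_certified _ _ _ _ _ _ u t range_large_certified).
  - unfold Q2R; simpl; lra.
  - unfold Q2R; simpl; lra.
  - simpl; unfold Q2R, u; simpl; field; lra.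
  - rewrite !peval_const_add, !peval_scale, !Q2R_red, !Q2R_mult, Q2R_opp.
    pose proof (atan_taylor_bounds_nonneg 1 u ltac:(lra)) as Hb1.
    pose proof (atan_taylor_bounds_nonneg 2 u ltac:(lra)) as Hb2.
    cbn [Nat.mul Nat.add] in Hb1, Hb2.
    replace (Q2R 2) with 2 by (unfold Q2R; simpl; field).
    rewrite RMicromega.Q2R_1; lra.
Qed.

Lemma key_polys_pos_all t : 0 < t -> key_polys_pos (atan t) t.
Proof.
  intro Ht.
  destruct (Rlt_le_dec t (1 / 2)); [apply key_polys_pos_small; lra|].
  destruct (Rle_lt_dec t 1); [apply key_polys_pos_below_1; lra|].
  destruct (Rlt_le_dec t 3); [apply key_polys_pos_below_3; lra|].
  apply key_polys_pos_large; lra.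
Qed.

(** * The trigonometric reduction *)

Lemma tan_derive x : - PI / 2 < x < PI / 2 -> derivable_pt_lim tan x (1 + tan x ^ 2).
Proof. intro Hx; apply (derive_pt_eq_1 tan x _ (derivable_pt_tan x Hx)), derive_pt_tan. Qed.

Lemma tan_gt_id x : 0 < x < PI / 2 -> x < tan x.
Proof.
  intro Hx.
  assert (Hd : forall c, 0 <= c <= x -> derivable_pt_lim (fun z => tan z - z) c (tan c ^ 2)).
  { intros c Hc; replace (tan c ^ 2) with (1 + tan c ^ 2 - 1) by ring.
    apply derivable_pt_lim_minus; [apply tan_derive | apply derivable_pt_lim_id].
    pose proof PI_RGT_0; lra. }
  destruct (MVT_cor2 _ _ 0 x (proj1 Hx) Hd) as (c & E & Hc).
  rewrite tan_0 in E.
  assert (0 < tan c) by (apply tan_gt_0; lra).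
  assert (0 < tan c ^ 2 * (x - 0)) by (apply Rmult_lt_0_compat; [apply pow_lt|]; lra).
  lra.
Qed.

Lemma key_polys_pos_tan x : 0 < x < PI / 2 -> key_polys_pos x (tan x).
Proof.
  intro Hx; replace x with (atan (tan x)) at 1 by (apply atan_tan; lra).
  apply key_polys_pos_all, tan_gt_0; lra.
Qed.

Lemma p_q_pos_tan x : 0 < x < PI / 2 -> 0 < p_at x (tan x) /\ 0 < q_at x (tan x).
Proof.
  intro Hx; pose proof (tan_gt_id x Hx); destruct (key_polys_pos_tan x Hx) as (_ & _ & _ & Hq).
  rewrite beval_q_poly in Hq; unfold p_at; split; lra.
Qed.

Lemma B_sub_3A_tan x : cos x <> 0 ->
  B x - 3 * A x = cos x ^ 3 * p_at x (tan x) * q_at x (tan x).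
Proof. intro Hc; unfold B, A, p_at, q_at, tan; field; exact Hc. Qed.

Lemma C_sub_A_tan x : cos x <> 0 -> C x - 8 / 5 * A x =
  cos x ^ 3 * (2 * p_at x (tan x) * q_at x (tan x) + 12 / 5 * p_at x (tan x) ^ 2
               - tan x * q_at x (tan x)).
Proof.
  intro Hc; pose proof (sin2_cos2 x) as Hsc; unfold Rsqr in Hsc.
  unfold C, A, p_at, q_at, tan.
  (* the two sides differ by a multiple of [sin^2 + cos^2 - 1] *)
  transitivity (cos x ^ 3 * (2 * (sin x / cos x - x)
      * (x * ((sin x / cos x) ^ 2 + 3) - 3 * (sin x / cos x))
      + 12 / 5 * (sin x / cos x - x) ^ 2
      - sin x / cos x * (x * ((sin x / cos x) ^ 2 + 3) - 3 * (sin x / cos x)))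
    + (sin x * sin x + cos x * cos x - 1) * (- x * sin x + 2 * x ^ 2 * cos x)).
  - field; exact Hc.
  - rewrite Hsc; ring.
Qed.

Definition g2_tan (x : R) : R :=
  2 + 12 / 5 * (p_at x (tan x) / q_at x (tan x)) - tan x / p_at x (tan x).

Lemma g2_eq_g2_tan x : 0 < x < PI / 2 -> g2 x = g2_tan x.
Proof.
  intro Hx; destruct (p_q_pos_tan x Hx) as [Hp Hq].
  assert (Hc : 0 < cos x) by (apply cos_gt_0; pose proof PI_RGT_0; lra).
  unfold g2, g2_tan; rewrite B_sub_3A_tan, C_sub_A_tan by lra.
  field; repeat split; try lra; apply pow_nonzero; lra.
Qed.

Lemma g2_tan_derive x : 0 < x < PI / 2 ->
  is_derive g2_tan x
    (beval dg2_num x (tan x) / (5 * p_at x (tan x) ^ 2 * q_at x (tan x) ^ 2)).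
Proof.
  intro Hx; destruct (p_q_pos_tan x Hx) as [Hp Hq].
  assert (Dt : is_derive tan x (1 + tan x ^ 2)).
  { apply is_derive_Reals, tan_derive; pose proof PI_RGT_0; lra. }
  unfold g2_tan, p_at, q_at in *; auto_derive.
  - repeat split; try (exists (1 + tan x ^ 2); exact Dt); lra.
  - replace (Derive (fun z => tan z) x) with (1 + tan x ^ 2)
      by (symmetry; apply is_derive_unique, Dt).
    rewrite beval_dg2_num; unfold p_at, q_at, m_at; field; split; lra.
Qed.

Lemma g2_tan_increasing x y : 0 < x < PI / 2 -> 0 < y < PI / 2 -> x < y ->
  g2_tan x < g2_tan y.
Proof.
  intros Hx Hy Hxy.
  set (dg := fun c => beval dg2_num c (tan c) / (5 * p_at c (tan c) ^ 2 * q_at c (tan c) ^ 2)).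
  assert (Hd : forall c, x <= c <= y -> derivable_pt_lim g2_tan c (dg c)).
  { intros c Hc; apply is_derive_Reals, g2_tan_derive; lra. }
  destruct (MVT_cor2 g2_tan dg x y Hxy Hd) as (c & E & Hc).
  assert (Hc' : 0 < c < PI / 2) by lra.
  destruct (p_q_pos_tan c Hc') as [Hp Hq].
  destruct (key_polys_pos_tan c Hc') as (Hn & _).
  assert (0 < dg c) by (apply Rdiv_lt_0_compat; [lra|];
    repeat apply Rmult_lt_0_compat; try apply pow_lt; lra).
  assert (0 < dg c * (y - x)) by (apply Rmult_lt_0_compat; lra).
  lra.
Qed.

Lemma g2_tan_bounds x : 0 < x < PI / 2 -> 34 / 35 < g2_tan x < 1.
Proof.
  intro Hx; destruct (p_q_pos_tan x Hx) as [Hp Hq].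
  destruct (key_polys_pos_tan x Hx) as (_ & Hup & Hlo & _).
  assert (Elo : g2_tan x - 34 / 35
                = beval gap_lower x (tan x) / (35 * p_at x (tan x) * q_at x (tan x))).
  { unfold g2_tan; rewrite beval_gap_lower; field; lra. }
  assert (Eup : 1 - g2_tan x
                = beval gap_upper x (tan x) / (5 * p_at x (tan x) * q_at x (tan x))).
  { unfold g2_tan; rewrite beval_gap_upper; field; lra. }
  assert (0 < beval gap_lower x (tan x) / (35 * p_at x (tan x) * q_at x (tan x)))
    by (apply Rdiv_lt_0_compat; nra).
  assert (0 < beval gap_upper x (tan x) / (5 * p_at x (tan x) * q_at x (tan x)))
    by (apply Rdiv_lt_0_compat; nra).
  lra.
Qed.

Theorem lemma7 :
  (forall x : R, 0 < x < PI / 2 -> B x - 3 * A x > 0) /\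
  (forall x y : R, 0 < x < PI / 2 -> 0 < y < PI / 2 -> x < y -> g2 x < g2 y) /\
  (forall x : R, 0 < x < PI / 2 -> 34 / 35 < g2 x < 1).
Proof.
  split; [|split].
  - intros x Hx; destruct (p_q_pos_tan x Hx) as [Hp Hq].
    assert (Hc : 0 < cos x) by (apply cos_gt_0; pose proof PI_RGT_0; lra).
    rewrite B_sub_3A_tan by lra.
    apply Rlt_gt; repeat apply Rmult_lt_0_compat; try apply pow_lt; lra.
  - intros x y Hx Hy Hxy; rewrite !g2_eq_g2_tan by assumption.
    exact (g2_tan_increasing x y Hx Hy Hxy).
  - intros x Hx; rewrite g2_eq_g2_tan by assumption; exact (g2_tan_bounds x Hx).
Qed.
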